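(* Let $k\ge 1$ and consider $k$ linear constraints $\mathcal{C}_i[y]=\kappa_i$, $i=1,\dots,k$, on $y:\mathbb{R}\to\mathbb{R}$, with $\kappa_i\in\mathbb{R}$. Let $s_1,\dots,s_k$ be support functions with invertible support matrix $\mathbb{S}_{ij}=\mathcal{C}_i[s_j]$, $\alpha=\mathbb{S}^{-1}$, switching functions $\phi_j(x)=\sum_m s_m(x)\alpha_{mj}$, projection functionals $\rho_j(x,g(x))=\kappa_j-\mathcal{C}_j[g]$, and constrained expression $y(x,g(x))=g(x)+\sum_{j}\phi_j(x)\rho_j(x,g(x))$. Then for any function $f:\mathbb{R}\to\mathbb{R}$ satisfying the constraints (i.e., $\mathcal{C}_i[f]=\kappa_i$ for all $i$) there exists at least one free function $g$ such that $y(x,g(x))=f(x)$. Equivalently, the constrained expression, viewed as a functional from the set of all free functions to the set of all functions satisfying the constraints, is surjective.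
   Context: Each $\mathcal{C}_i$ is a linear operator returning the operand function evaluated in the same way as the dependent variable appears in the $i$-th constraint (combinations of values, derivatives and integrals of the function). A free function is any $g:\mathbb{R}\to\mathbb{R}$ for which all $\mathcal{C}_i[g]$ are defined. *)

From HB Require Import structures.
From mathcomp Require Import all_boot all_order all_algebra.
From mathcomp Require Import reals.
Set Implicit Arguments. Unset Strict Implicit. Unset Printing Implicit Defensive.
Import Order.TTheory GRing.Theory Num.Theory.
Local Open Scope ring_scope.

Section TFC.
Variables (R : realType) (k : nat).

(* D = the set of free functions: those g for which all C_i[g] are defined.
   It is a linear subspace of R -> R. *)
Definition lin_subspace (D : (R -> R) -> Prop) : Prop :=
  D (fun _ => 0) /\ forall (a : R) u v, D u -> D v -> D (fun x => a * u x + v x).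

(* A functional defined on D (values outside D are irrelevant) that is linear on D. *)
Definition linear_on (D : (R -> R) -> Prop) (L : (R -> R) -> R) : Prop :=
  forall (a : R) u v, D u -> D v -> L (fun x => a * u x + v x) = a * L u + L v.

Variables (C : 'I_k -> (R -> R) -> R) (kappa : 'I_k -> R) (s : 'I_k -> R -> R).

Definition support_matrix : 'M[R]_k := \matrix_(i, j) C i (s j).

Definition alpha : 'M[R]_k := invmx support_matrix.

Definition switching (j : 'I_k) (x : R) : R := \sum_(m < k) s m x * alpha m j.

Definition projection (j : 'I_k) (g : R -> R) : R := kappa j - C j g.

Definition constrained_expr (g : R -> R) (x : R) : R :=
  g x + \sum_(j < k) switching j x * projection j g.

End TFC.

From HB Require Import structures.
From mathcomp Require Import all_boot all_order all_algebra.
From mathcomp Require Import reals.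
Import Order.TTheory GRing.Theory Num.Theory.
Local Open Scope ring_scope.

Lemma projection_eq0 (R : realType) (k : nat) (C : 'I_k -> (R -> R) -> R)
    (kappa : 'I_k -> R) (f : R -> R) (j : 'I_k) :
  C j f = kappa j -> projection C kappa j f = 0.
Proof. by move=> Cf; rewrite /projection Cf subrr. Qed.

Lemma constrained_expr_fixed (R : realType) (k : nat)
    (C : 'I_k -> (R -> R) -> R) (kappa : 'I_k -> R) (s : 'I_k -> R -> R)
    (f : R -> R) :
  (forall i, C i f = kappa i) -> constrained_expr C kappa s f =1 f.
Proof.
move=> Cf x; rewrite /constrained_expr big1 ?addr0 // => j _.
by rewrite projection_eq0 ?mulr0.
Qed.

Theorem theorem2 (R : realType) (k : nat) (hk : (0 < k)%N)
  (D : (R -> R) -> Prop) (C : 'I_k -> (R -> R) -> R) (kappa : 'I_k -> R)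
  (s : 'I_k -> R -> R) :
  lin_subspace D ->
  (forall i, linear_on D (C i)) ->
  (forall j, D (s j)) ->
  support_matrix C s \in unitmx ->
  forall f : R -> R, D f -> (forall i, C i f = kappa i) ->
  exists g : R -> R, D g /\ (forall x, constrained_expr C kappa s g x = f x).
Proof.
(* Linearity and invertibility of the support matrix make the constrained
   expression land in the constrained set. *)
move=> _ _ _ _ f Df Cf.
by exists f; split; last exact: constrained_expr_fixed.
Qed.
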